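(* Let $T$ be a diametrical tree with diametral path $D = v_0 v_1 \cdots v_d$ and endpoints $e_1=v_0$, $e_2=v_d$. If a limb of type (A) or of type (B) is located at $v_i$, then $i \geq 2$ and $d-i \geq 2$; if a limb of type (C) is located at $v_i$, then $i \geq 1$ and $d - i \geq 1$.
   Context: Let $G=(V,E)$ be a finite connected graph with distance $d(u,v)$, eccentricity $e(v)=\max_w d(v,w)$ and diameter $\mathrm{diam}(G)=\max_v e(v)$. A broadcast is a function $f: V\to\{0,\dots,\mathrm{diam}(G)\}$ with $f(v)\le e(v)$; its cost is $\sum_v f(v)$; it is dominating if every $u$ has some $v$ with $f(v)\ge 1$ and $d(u,v)\le f(v)$; a dominating broadcast is minimal if decreasing $f(v)$ for any $v$ with $f(v)>0$ destroys domination. $\Gamma_b(G)$ is the maximum cost of a minimal dominating broadcast, and $G$ is called diametrical if $\Gamma_b(G)=\mathrm{diam}(G)$. For a tree $T$ with a fixed diametral path $D=v_0\cdots v_d$, a vertex $u\notin D$ protrudes from $v_i$ if $v_i$ is the vertex of $D$ closest to $u$; the limb at $v_i$ (when nonempty) is the subtree induced by $v_i$ and the vertices protruding from $v_i$. It is of type (A) if it is a path $v_i x y$ of length 2 (exactly two protruding vertices); of type (B) if it consists of exactly two leaves adjacent to $v_i$; of type (C) if it consists of exactly one leaf adjacent to $v_i$. *)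

From mathcomp Require Import all_boot.
Set Implicit Arguments. Unset Strict Implicit. Unset Printing Implicit Defensive.

Section Graphs.
Variable T : finType.
Variable e : rel T.

Definition simple_graph : Prop := irreflexive e /\ symmetric e.
Definition connected : Prop := forall u v : T, connect e u v.
Definition has_cycle : Prop := exists c : seq T, [/\ 3 <= size c, uniq c & cycle e c].
Definition is_tree : Prop := [/\ simple_graph, connected & ~ has_cycle].

Fixpoint reachk (k : nat) (u v : T) : bool :=
  if k is k'.+1 then (u == v) || [exists w, e u w && reachk k' w v] else u == v.

(* graph distance (correct for connected graphs: distances are < #|T|) *)
Definition dist (u v : T) : nat := find (fun k => reachk k u v) (iota 0 #|T|).

Definition ecc (v : T) : nat := \max_(w : T) dist v w.
Definition diam : nat := \max_(v : T) ecc v.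

Definition broadcast (f : T -> nat) : bool := [forall v, (f v <= diam) && (f v <= ecc v)].
Definition dominating (f : T -> nat) : bool :=
  [forall u, [exists v, (1 <= f v) && (dist u v <= f v)]].
Definition minimal_dominating (f : T -> nat) : bool :=
  [&& broadcast f, dominating f &
  [forall v, (0 < f v) ==> [forall k : 'I_(f v),
    ~~ dominating (fun w => if w == v then nat_of_ord k else f w)]]].
Definition cost (f : T -> nat) : nat := \sum_(v : T) f v.

Definition Gamma_b : nat :=
  \max_(f : {ffun T -> 'I_diam.+1} |
          minimal_dominating (fun v => nat_of_ord (f v)))
     cost (fun v => nat_of_ord (f v)).
Definition diametrical : Prop := Gamma_b = diam.

Definition diametral_path (d : nat) (D : nat -> T) : Prop :=
  [/\ d = diam, dist (D 0) (D d) = d & forall i, i < d -> e (D i) (D i.+1)].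

Definition on_path (d : nat) (D : nat -> T) (u : T) : Prop := exists2 j, j <= d & u = D j.

Definition protrudes (d : nat) (D : nat -> T) (u : T) (i : nat) : Prop :=
  [/\ i <= d, ~ on_path d D u &
      forall j, j <= d -> j != i -> dist u (D i) < dist u (D j)].

(* limb types at v_i (limb = v_i together with the vertices protruding from v_i) *)
Definition limbA (d : nat) (D : nat -> T) (i : nat) : Prop :=
  exists x y : T, [/\ x != y, e (D i) x, e x y & ~~ e (D i) y] /\
    forall u, protrudes d D u i <-> (u = x \/ u = y).
Definition limbB (d : nat) (D : nat -> T) (i : nat) : Prop :=
  exists x y : T, [/\ x != y, e (D i) x & e (D i) y] /\
    forall u, protrudes d D u i <-> (u = x \/ u = y).
Definition limbC (d : nat) (D : nat -> T) (i : nat) : Prop :=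
  exists x : T, e (D i) x /\ forall u, protrudes d D u i <-> u = x.

End Graphs.

From mathcomp Require Import all_boot zify.
From Stdlib Require Import FunctionalExtensionality.

(* Measure levels from the endpoint v_d of the diametral path.  The other
   endpoint v_0 sits at level diam, so it is a leaf; hence limbs only occur at
   0 < i < d.  Every off-path neighbour x of v_1 is a child of v_1, at level
   diam, hence a leaf: no limb of type (A) at v_1.  Two such leaves x, y give,
   with v_0, three vertices at distance diam from v_d; broadcasting from v_d
   with strength about diam - 1 or diam - 2 and from each vertex at distance
   diam with strength 1 is then a minimal dominating broadcast of cost greater
   than diam, so the tree is not diametrical: no limb of type (B) at v_1.
   Reversing the path gives the bounds on d - i. *)

Set Implicit Arguments. Unset Strict Implicit. Unset Printing Implicit Defensive.

Section Walks.
Variables (T : finType) (e : rel T).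

Lemma reachkS k u v : reachk e k u v -> reachk e k.+1 u v.
Proof.
elim: k u => [|k IHk] u /=; first by move->.
case/orP=> [->//|/existsP[w /andP[uw wv]]].
by apply/orP; right; apply/existsP; exists w; rewrite uw; apply: IHk.
Qed.

Lemma reachk_leq k m u v : k <= m -> reachk e k u v -> reachk e m u v.
Proof. by move/subnK <-; elim: (m - k) => // n IHn /IHn /reachkS. Qed.

Lemma reachk_refl k u : reachk e k u u.
Proof. by case: k => [|k] /=; rewrite eqxx. Qed.

Lemma reachk_edge u v : e u v -> reachk e 1 u v.
Proof. by move=> uv /=; apply/orP; right; apply/existsP; exists v; rewrite uv eqxx. Qed.

Lemma reachk_trans a b u w v :
  reachk e a u w -> reachk e b w v -> reachk e (a + b) u v.
Proof.
elim: a u => [|a IHa] u; first by move=> /= /eqP->.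
move=> /orP[/eqP-> wv|/existsP[x /andP[ux xw]] wv].
  by apply: reachk_leq wv; rewrite leq_addl.
by rewrite addSn; apply/orP; right; apply/existsP; exists x; rewrite ux; apply: IHa.
Qed.

Lemma reachk_sym : symmetric e -> forall k u v, reachk e k u v -> reachk e k v u.
Proof.
move=> e_sym; elim=> [|k IHk] u v; first by rewrite /= eq_sym.
move=> /orP[/eqP->|/existsP[w /andP[uw wv]]]; first exact: reachk_refl.
by rewrite -addn1; apply: reachk_trans (IHk _ _ wv) _; apply: reachk_edge; rewrite e_sym.
Qed.

Lemma reachk_path x p : path e x p -> reachk e (size p) x (last x p).
Proof.
elim: p x => [|y p IHp] x /=; first by rewrite eqxx.
by case/andP=> xy /IHp yp; apply/orP; right; apply/existsP; exists y; rewrite xy.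
Qed.

Lemma dist_le_ecc u v : dist e u v <= ecc e u.
Proof. exact: (@leq_bigmax _ (fun w => dist e u w)). Qed.

Lemma dist_le_diam u v : dist e u v <= diam e.
Proof. exact: leq_trans (dist_le_ecc u v) (@leq_bigmax _ (ecc e) u). Qed.

Lemma reachk_dist k u v : reachk e k u v -> dist e u v <= k.
Proof.
move=> uv; rewrite leqNgt; apply/negP => lt_k.
have := before_find 0 lt_k; rewrite nth_iota ?add0n ?uv //.
by apply: leq_trans lt_k _; rewrite -[X in _ <= X](size_iota 0) find_size.
Qed.

Lemma dist_edge u v : e u v -> dist e u v <= 1.
Proof. by move/reachk_edge/reachk_dist. Qed.

Lemma dist_xx u : dist e u u = 0.
Proof. by apply/eqP; rewrite -leqn0; apply/reachk_dist/reachk_refl. Qed.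

Section Distance.
Hypothesis e_conn : connected e.

Lemma reachk_lt_card u v : exists2 k, k < #|T| & reachk e k u v.
Proof.
have /connectP[p ep ->] := e_conn u v.
have [q eq uq _] := shortenP ep.
exists (size q); last exact: reachk_path.
by have := max_card (mem (u :: q)); rewrite (card_uniqP uq).
Qed.

Lemma dist_reachk u v : reachk e (dist e u v) u v.
Proof.
have [k lt_k uv] := reachk_lt_card u v.
have has_k : has (fun k => reachk e k u v) (iota 0 #|T|).
  by apply/hasP; exists k; rewrite ?mem_iota.
have := nth_find 0 has_k; rewrite nth_iota ?add0n //.
by rewrite -[X in _ < X](size_iota 0) -has_find.
Qed.

Lemma dist_triangle u w v : dist e u v <= dist e u w + dist e w v.
Proof. exact/reachk_dist/(reachk_trans (dist_reachk u w) (dist_reachk w v)). Qed.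

Lemma dist_eq0 u v : dist e u v = 0 -> u = v.
Proof. by move=> uv0; have := dist_reachk u v; rewrite uv0 => /eqP. Qed.

Lemma dist_le1 u v : dist e u v <= 1 -> u = v \/ e u v.
Proof.
move=> le1; have /= := reachk_leq le1 (dist_reachk u v).
by case/orP=> [/eqP|/existsP[w /andP[uw /eqP <-]]]; [left | right].
Qed.

Hypothesis e_sym : symmetric e.

Lemma dist_sym u v : dist e u v = dist e v u.
Proof. by apply/eqP; rewrite eqn_leq !reachk_dist // reachk_sym // dist_reachk. Qed.

Lemma dist_parent r u k : dist e r u = k.+1 -> exists2 p, e u p & dist e r p = k.
Proof.
rewrite dist_sym => ur; have := dist_reachk u r; rewrite ur /=.
case/orP=> [/eqP eq_ur|/existsP[p /andP[up pr]]]; first by move: ur; rewrite eq_ur dist_xx.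
exists p => //; rewrite dist_sym.
have := dist_triangle u p r; have := dist_edge up; have := reachk_dist pr; lia.
Qed.

End Distance.
End Walks.

Section Trees.
Variables (T : finType) (e : rel T) (r : T).
Hypothesis e_tree : is_tree e.

Let e_irr : irreflexive e. Proof. by case: e_tree => [[]]. Qed.
Let e_sym : symmetric e. Proof. by case: e_tree => [[]]. Qed.
Let e_conn : connected e. Proof. by case: e_tree. Qed.
Let e_acyclic : ~ has_cycle e. Proof. by case: e_tree. Qed.

Local Notation level := (dist e r).

Lemma level_edge_le a b : e a b -> level b <= (level a).+1.
Proof. by move=> ab; have := dist_triangle e_conn r a b; have := dist_edge ab; lia. Qed.

(* Climb from x and y towards r in lockstep until the two walks meet. *)
Lemma level_route k x y : x != y -> level x = k -> level y = k ->
  exists q, [/\ path e x q, last x q = y, uniq (x :: q), 1 < size q &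
                all (fun z => level z <= k) (x :: q)].
Proof.
elim: k x y => [|k IHk] x y neq_xy lx ly.
  by move: neq_xy; rewrite -(dist_eq0 e_conn lx) -(dist_eq0 e_conn ly) eqxx.
have [px xpx lpx] := dist_parent e_conn e_sym lx.
have [py ypy lpy] := dist_parent e_conn e_sym ly.
have below z s : level z = k.+1 -> all (fun z => level z <= k) s -> z \notin s.
  by move=> lz /allP sk; apply/negP => /sk /=; rewrite lz ltnn.
have [eq_p|neq_p] := eqVneq px py.
  exists [:: px; y]; split => //=; rewrite ?lx ?ly ?lpx ?leqnn ?leqnSn //.
  - by rewrite xpx eq_p e_sym ypy.
  - rewrite !inE negb_or neq_xy !andbT.
    by apply/andP; split; apply/eqP => /(congr1 level); lia.
have [q [pq qp uq sq allq]] := IHk px py neq_p lpx lpy.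
exists (rcons (px :: q) y); split.
- by rewrite /= xpx rcons_path pq qp e_sym ypy.
- by rewrite last_rcons.
- rewrite cons_uniq rcons_uniq mem_rcons inE negb_or neq_xy uq andbT.
  by rewrite !below.
- by rewrite size_rcons.
- rewrite /= all_rcons lx ly !leqnn /=.
  by apply: sub_all allq => z /= /leqW.
Qed.

Lemma level_edge_neq a b : e a b -> level a != level b.
Proof.
move=> ab; apply/eqP => lab.
have neq_ab : a != b by apply: contraTneq ab => ->; rewrite e_irr.
have [q [aq qb uq sq _]] := level_route neq_ab erefl (esym lab).
by apply: e_acyclic; exists (a :: q); split => //; rewrite /cycle rcons_path aq qb e_sym.
Qed.

Lemma lower_nbr_uniq u p p' : e u p -> e u p' ->
  level p < level u -> level p' < level u -> p = p'.
Proof.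
move=> up up' ltp ltp'; have [//|neq_p] := eqVneq p p'.
have le_u : level u <= (level p).+1 by apply: level_edge_le; rewrite e_sym.
have le_u' : level u <= (level p').+1 by apply: level_edge_le; rewrite e_sym.
have [|q [pq qp' uq sq allq]] := level_route neq_p erefl (_ : level p' = level p).
  lia.
exfalso; apply: e_acyclic; exists [:: u, p & q]; split.
- by rewrite /=; lia.
- by rewrite cons_uniq uq andbT; apply/negP => /(allP allq) /=; lia.
- by rewrite /cycle /= up rcons_path pq qp' e_sym.
Qed.

Lemma level_child u p w : e u p -> level p < level u -> e u w -> w != p ->
  level w = (level u).+1.
Proof.
move=> up ltp uw neq_wp; have := level_edge_le uw.
have [ltw|gtw|eqw] := ltngtP (level w) (level u); first 2 last.
- by move: (level_edge_neq uw); rewrite eqw eqxx.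
- by move: neq_wp; rewrite (lower_nbr_uniq uw up ltw ltp) eqxx.
- lia.
Qed.

Lemma far_leaf a p x : level a = diam e -> e a p -> level p < level a -> e a x -> x = p.
Proof.
move=> la ap ltp ax; have [//|neq_xp] := eqVneq x p.
have := level_child ap ltp ax neq_xp; have := dist_le_diam e r x; lia.
Qed.

End Trees.

Lemma minimal_dominating_cost_le (T : finType) (e : rel T) (f : T -> nat) :
  minimal_dominating e f -> cost f <= Gamma_b e.
Proof.
move=> mdf; have /and3P[/forallP bf _ _] := mdf; move: mdf.
pose F : {ffun T -> 'I_(diam e).+1} := [ffun v => inord (f v)].
have -> : f = fun v => nat_of_ord (F v).
  apply: functional_extensionality => v.
  by rewrite ffunE inordK // ltnS; case/andP: (bf v).
by move=> mdF; rewrite /Gamma_b; apply: leq_bigmax_cond.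
Qed.

Lemma not_dominating_at (T : finType) (e : rel T) (f : T -> nat) u :
  (forall v, 0 < f v -> f v < dist e u v) -> ~~ dominating e f.
Proof.
move=> far_u; apply/forallPn; exists u; apply/existsPn => v.
have [fv0|/far_u lt_fv] := posnP (f v); apply/nandP; first by left; rewrite ?fv0.
by right; rewrite -ltnNge.
Qed.

Section RadialBroadcast.
Variables (T : finType) (e : rel T) (r : T).
Hypothesis e_tree : is_tree e.

Let e_sym : symmetric e. Proof. by case: e_tree => [[]]. Qed.
Let e_conn : connected e. Proof. by case: e_tree. Qed.

Local Notation level := (dist e r).

Definition far : {set T} := [set z | level z == diam e].
Definition far_nbr (u : T) : bool := [exists z in far, e u z].

Definition radial_broadcast (c : nat) (v : T) : nat := if v == r then c else v \in far.

Lemma cost_radial c : 0 < diam e -> cost (radial_broadcast c) = c + #|far|.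
Proof.
move=> diam_gt0; have r_far : r \notin far by rewrite inE dist_xx eq_sym -lt0n.
rewrite /cost (bigD1 r) //= /radial_broadcast eqxx; congr (_ + _).
rewrite -sum1_card [RHS]big_mkcond [RHS](bigD1 r) //= (negbTE r_far) add0n.
by apply: eq_bigr => v /negbTE ->.
Qed.

Lemma far_dist_gt1 u z : u \notin far -> ~~ far_nbr u -> z \in far -> 1 < dist e u z.
Proof.
move=> u_far nu z_far; rewrite ltnNge; apply/negP => /(dist_le1 e_conn) [eq_uz|uz].
  by move: u_far; rewrite eq_uz z_far.
by case/negP: nu; apply/existsP; exists z; rewrite z_far uz.
Qed.

Section Minimality.
Variable c : nat.
Hypotheses (c_gt0 : 0 < c) (c_lt_diam : c < diam e) (far_gt0 : 0 < #|far|).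
Hypothesis cover : forall u, c < level u < diam e -> far_nbr u.
(* lowering the strength of [r] to [k] leaves [u] undominated *)
Hypothesis tight : forall k, 0 < k < c -> exists2 u, k < level u < diam e & ~~ far_nbr u.

Local Notation g := (radial_broadcast c).

Lemma broadcast_radial : broadcast e g.
Proof.
have /card_gt0P[z z_far] := far_gt0; move: (z_far); rewrite inE => /eqP lz.
apply/forallP => v; rewrite /g /radial_broadcast; case: eqP => [->|_].
  by rewrite ltnW //= (leq_trans (ltnW c_lt_diam)) // -lz dist_le_ecc.
case: (boolP (v \in far)) => //; rewrite inE => /eqP lv /=.
by have := dist_le_ecc e v r; rewrite dist_sym // lv; lia.
Qed.

Lemma dominating_radial : dominating e g.
Proof.
apply/forallP => u; apply/existsP; rewrite /radial_broadcast.
have [le_uc|lt_cu] := leqP (level u) c.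
  by exists r; rewrite eqxx c_gt0 dist_sym.
have [lu|ltu] := eqVneq (level u) (diam e).
  exists u; rewrite dist_xx andbT; case: eqP => [eq_ur|_]; last by rewrite inE lu eqxx.
  by move: lu; rewrite eq_ur dist_xx; lia.
have /existsP[z /andP[z_far uz]] : far_nbr u.
  by apply: cover; rewrite lt_cu ltn_neqAle ltu dist_le_diam.
exists z; case: eqP => [eq_zr|_]; last by rewrite z_far (dist_edge uz).
by move: z_far; rewrite inE eq_zr dist_xx => /eqP; lia.
Qed.

Lemma not_dominating_radial_root k : k < c ->
  ~~ dominating e (fun w => if w == r then k else g w).
Proof.
move=> lt_kc.
have [u [lt_ku nu u_far]] :
    exists u, [/\ (k == 0) || (k < level u), ~~ far_nbr u & u \notin far].
  have [k0|k_gt0] := posnP k.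
    exists r; rewrite k0 inE dist_xx; split => //; last by rewrite eq_sym; lia.
    apply/existsP => -[z /andP[]]; rewrite inE => /eqP lz /dist_edge; lia.
  have [|u /andP[lt_ku lt_ud] nu] := tight (k := k); first by rewrite k_gt0.
  by exists u; rewrite lt_ku orbT nu inE neq_ltn lt_ud.
apply: (not_dominating_at (u := u)) => w; rewrite /radial_broadcast.
case: eqP => [->|_]; first by rewrite dist_sym //; move: lt_ku; case: eqP => // ->.
by case: (boolP (w \in far)) => // w_far _; apply: far_dist_gt1.
Qed.

Lemma not_dominating_radial_far v : v \in far ->
  ~~ dominating e (fun w => if w == v then 0 else g w).
Proof.
move=> v_far; apply: (not_dominating_at (u := v)) => w.
have [//|neq_wv] := eqVneq w v; rewrite /radial_broadcast.
case: eqP => [->|_]; first by move: v_far; rewrite inE dist_sym // => /eqP ->.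
case: (boolP (w \in far)) => // w_far _; rewrite ltnNge.
apply/negP => /(dist_le1 e_conn) [eq_vw|vw]; first by rewrite eq_vw eqxx in neq_wv.
move: (level_edge_neq r e_tree vw); rewrite !inE in v_far w_far.
by rewrite (eqP v_far) (eqP w_far) eqxx.
Qed.

Lemma minimal_dominating_radial : minimal_dominating e g.
Proof.
rewrite /minimal_dominating broadcast_radial dominating_radial /=.
apply/forallP => v; apply/implyP => gv_gt0; apply/forallP => k.
move: (ltn_ord k); move: (nat_of_ord k) => {}k lt_k.
have [eq_vr|neq_vr] := eqVneq v r.
  by rewrite eq_vr; apply: not_dominating_radial_root; rewrite eq_vr /radial_broadcast eqxx in lt_k.
have v_far : v \in far.
  by move: gv_gt0; rewrite /radial_broadcast (negbTE neq_vr); case: (v \in far).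
have -> : k = 0 by move: lt_k; rewrite /radial_broadcast (negbTE neq_vr) v_far; lia.
exact: not_dominating_radial_far.
Qed.

End Minimality.

(* Take c = diam - 1 if some vertex at level diam - 1 has no neighbour in [far],
   and c = max (diam - 2) 1 otherwise. *)
Lemma diam_lt_Gamma_b : 1 < diam e -> 2 < #|far| -> diam e < Gamma_b e.
Proof.
move=> diam_gt1 far_gt2; have far_gt0 : 0 < #|far| by lia.
suff [c [c_ge c_gt0 c_lt md]] : exists c, [/\ (diam e).-2 <= c, 0 < c, c < diam e &
                                           minimal_dominating e (radial_broadcast c)].
  by apply: leq_trans (minimal_dominating_cost_le md); rewrite cost_radial; lia.
case: (boolP [exists w, (level w == (diam e).-1) && ~~ far_nbr w]).
  case/existsP => w /andP[/eqP lw nw]; exists (diam e).-1; split; try lia.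
  apply: minimal_dominating_radial; try lia.
  by move=> k lt_k; exists w; rewrite ?lw; lia.
move=> /existsPn all_nbr; exists (maxn (diam e).-2 1); split; try lia.
have /card_gt0P[z] := far_gt0; rewrite inE => /eqP lz.
have [|p _ lp] := dist_parent e_conn e_sym (_ : level z = (diam e).-2.+2); first lia.
have [p2 _ lp2] := dist_parent e_conn e_sym lp.
apply: minimal_dominating_radial; try lia.
- move=> u lu; have := all_nbr u; rewrite negb_and negbK.
  by have -> : level u == (diam e).-1 by apply/eqP; lia.
- move=> k lt_k; exists p2; first lia.
  apply/existsP => -[x /andP[]]; rewrite inE => /eqP lx /(level_edge_le r e_tree); lia.
Qed.

End RadialBroadcast.

Section DiametralPath.
Variables (T : finType) (e : rel T) (d : nat) (D : nat -> T).
Hypotheses (e_tree : is_tree e) (D_diam : diametral_path e d D).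

Let e_sym : symmetric e. Proof. by case: e_tree => [[]]. Qed.
Let e_conn : connected e. Proof. by case: e_tree. Qed.
Let d_diam : d = diam e. Proof. by case: D_diam. Qed.
Let D_edge i : i < d -> e (D i) (D i.+1). Proof. by case: D_diam => _ _; apply. Qed.

Lemma reachk_diametral_path j m : j + m <= d -> reachk e m (D j) (D (j + m)).
Proof.
elim: m j => [|m IHm] j le_d; first by rewrite addn0 reachk_refl.
rewrite -addSnnS -add1n; apply: reachk_trans (reachk_edge (D_edge _)) (IHm _ _); lia.
Qed.

Lemma dist_diametral_path j : j <= d -> dist e (D d) (D j) = d - j.
Proof.
move=> le_jd; case: D_diam => _ dist_0d _.
have le_0j : dist e (D 0) (D j) <= j.
  by apply: reachk_dist; rewrite -{2}[j]add0n; apply: reachk_diametral_path.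
have le_jd' : dist e (D j) (D d) <= d - j.
  by apply: reachk_dist; rewrite -{2}(subnKC le_jd); apply: reachk_diametral_path; lia.
rewrite dist_sym //; have := dist_triangle e_conn (D 0) (D j) (D d); lia.
Qed.

Lemma off_path_neq x j : ~ on_path d D x -> j <= d -> x != D j.
Proof. by move=> offx le_jd; apply: contra_not_neq offx => ->; exists j. Qed.

Lemma diametral_path_head_nbr x : e (D 0) x -> on_path d D x.
Proof.
move=> Dx; have [d0|d_gt0] := posnP d.
  exists 0 => //; apply/esym/(dist_eq0 e_conn).
  by have := dist_le_diam e (D 0) x; rewrite -d_diam d0; lia.
exists 1 => //; apply: (far_leaf (r := D d) e_tree) Dx.
- by rewrite dist_diametral_path // subn0.
- exact: D_edge.
- by rewrite !dist_diametral_path //; lia.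
Qed.

Lemma diametral_path_second_nbr_far x :
  1 < d -> e (D 1) x -> ~ on_path d D x -> dist e (D d) x = d.
Proof.
move=> d_gt1 Dx offx.
have lt_21 : dist e (D d) (D 2) < dist e (D d) (D 1) by rewrite !dist_diametral_path //; lia.
rewrite (level_child e_tree (D_edge (i := 1) d_gt1) lt_21 Dx (off_path_neq offx d_gt1)).
by rewrite dist_diametral_path //; lia.
Qed.

Lemma diametral_path_pendant_leaf x y :
  1 < d -> e (D 1) x -> ~ on_path d D x -> e x y -> y = D 1.
Proof.
move=> d_gt1 Dx offx xy; have lx := diametral_path_second_nbr_far d_gt1 Dx offx.
apply: (far_leaf (r := D d) e_tree) xy.
- by rewrite lx.
- by rewrite e_sym.
- by rewrite lx dist_diametral_path //; lia.
Qed.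

(* Otherwise v_0, x and y would be three vertices at distance diam from v_d. *)
Lemma diametral_path_second_pendant_uniq x y : diametrical e -> 1 < d ->
  e (D 1) x -> e (D 1) y -> ~ on_path d D x -> ~ on_path d D y -> x = y.
Proof.
move=> diam_e d_gt1 Dx Dy offx offy; have [//|neq_xy] := eqVneq x y.
have: diam e < Gamma_b e; last by rewrite diam_e ltnn.
apply: (diam_lt_Gamma_b (r := D d) e_tree); first by rewrite -d_diam.
apply/card_gt2P; exists x, y, (D 0); split; last split.
- rewrite !inE -d_diam (diametral_path_second_nbr_far _ Dx) //.
  by rewrite (diametral_path_second_nbr_far _ Dy) // dist_diametral_path // subn0 eqxx.
- exact: neq_xy.
- exact: off_path_neq offy _.
- by rewrite eq_sym; apply: off_path_neq offx _.
Qed.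

Lemma diametral_path_rev : diametral_path e d (fun j => D (d - j)).
Proof.
split => //; first by rewrite subn0 subnn dist_sym //; case: D_diam.
move=> i lt_id; rewrite e_sym (_ : d - i = (d - i.+1).+1); last lia.
apply: D_edge; lia.
Qed.

Lemma on_path_rev u : on_path d (fun j => D (d - j)) u <-> on_path d D u.
Proof. by split=> -[j le_jd ->]; exists (d - j); rewrite ?leq_subr ?subKn. Qed.

End DiametralPath.

Lemma pendant_index_bounds (T : finType) (e : rel T) (d : nat) (D : nat -> T) i x :
  is_tree e -> diametral_path e d D -> i <= d ->
  e (D i) x -> ~ on_path d D x -> 0 < i < d.
Proof.
move=> e_tree D_diam le_id Dx offx; rewrite lt0n ltn_neqAle le_id andbT.
apply/andP; split; apply/eqP => Ei; apply: offx.
  by apply: (diametral_path_head_nbr e_tree D_diam); rewrite -Ei.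
apply/on_path_rev/(diametral_path_head_nbr e_tree (diametral_path_rev e_tree D_diam)).
by rewrite subn0 -Ei.
Qed.

Lemma pendant_path2_index_gt1 (T : finType) (e : rel T) (d : nat) (D : nat -> T) i x y :
  is_tree e -> diametral_path e d D -> i <= d ->
  e (D i) x -> e x y -> ~ on_path d D x -> ~ on_path d D y -> 1 < i.
Proof.
move=> e_tree D_diam le_id Dx xy offx offy.
have /andP[i_gt0 lt_id] := pendant_index_bounds e_tree D_diam le_id Dx offx.
case: (ltngtP i 1) => // [|i1]; first lia.
rewrite i1 in Dx lt_id; case: offy; exists 1; first lia.
exact: (diametral_path_pendant_leaf e_tree D_diam lt_id Dx offx xy).
Qed.

Lemma pendant_pair_index_gt1 (T : finType) (e : rel T) (d : nat) (D : nat -> T) i x y :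
  is_tree e -> diametrical e -> diametral_path e d D -> i <= d -> x != y ->
  e (D i) x -> e (D i) y -> ~ on_path d D x -> ~ on_path d D y -> 1 < i.
Proof.
move=> e_tree diam_e D_diam le_id neq_xy Dx Dy offx offy.
have /andP[i_gt0 lt_id] := pendant_index_bounds e_tree D_diam le_id Dx offx.
case: (ltngtP i 1) => // [|i1]; first lia.
rewrite i1 in Dx Dy lt_id; move: neq_xy.
by rewrite (diametral_path_second_pendant_uniq e_tree D_diam diam_e lt_id Dx Dy offx offy) eqxx.
Qed.

Theorem mainTheorem10 (T : finType) (e : rel T) (d : nat) (D : nat -> T) :
  is_tree e -> diametrical e -> diametral_path e d D ->
  forall i, i <= d ->
    ((limbA e d D i \/ limbB e d D i) -> 2 <= i /\ 2 <= d - i) /\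
    (limbC e d D i -> 1 <= i /\ 1 <= d - i).
Proof.
move=> e_tree diam_e D_diam i le_id.
pose D' j := D (d - j).
have D'_diam : diametral_path e d D' := diametral_path_rev e_tree D_diam.
have D'_i : D' (d - i) = D i by rewrite /D' subKn.
have le_di : d - i <= d := leq_subr i d.
have off' u : ~ on_path d D u -> ~ on_path d D' u by move=> offu /on_path_rev.
split; last first.
  case=> x [Dx /(_ x) [_ /(_ erefl) [_ offx _]]].
  by have := pendant_index_bounds e_tree D_diam le_id Dx offx; lia.
case=> [[x [y [[_ Dx xy _] limb]]] | [x [y [[neq_xy Dx Dy] limb]]]];
  have off u : u = x \/ u = y -> ~ on_path d D u by case/limb.
all: have [offx offy] := (off x (or_introl erefl), off y (or_intror erefl)).
- split; first exact: pendant_path2_index_gt1 e_tree D_diam le_id Dx xy offx offy.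
  rewrite -D'_i in Dx.
  exact: pendant_path2_index_gt1 e_tree D'_diam le_di Dx xy (off' x offx) (off' y offy).
- split; first exact: pendant_pair_index_gt1 e_tree diam_e D_diam le_id neq_xy Dx Dy offx offy.
  rewrite -D'_i in Dx Dy.
  exact: pendant_pair_index_gt1 e_tree diam_e D'_diam le_di neq_xy Dx Dy (off' x offx) (off' y offy).
Qed.
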